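(* Consider computation in the l2-MBQC setting described in the context, where the only correlated resources are independent copies of the bipartite quantum CHSH box. Then reliable computation is possible: there exists a constant $\delta<1/2$ such that for every $n\ge 1$ and every Boolean function $f:\{0,1\}^n\to\{0,1\}$ there is an l2-MBQC procedure using finitely many independent CHSH boxes which, on every input $\vec b\in\{0,1\}^n$, outputs $f(\vec b)$ with probability at least $1-\delta$.
   Context: l2-MBQC (''MBQC with mod-2 linear classical processing''): a classical control computer receives an input string $\vec b=b_1\dots b_n$. It has access to black boxes, each of which receives a one-bit input from the control computer and returns a one-bit output. The control computer is restricted to computing sums modulo 2 of subsets of the input bits, of previously received box outputs, and possibly the constant $1$; each box input (which may depend on earlier box outputs, i.e. adaptively) and the final output of the computation must be such mod-2 affine functions. The bipartite quantum CHSH box consists of two one-bit-in/one-bit-out boxes sharing the two-qubit state $(|00\rangle+|11\rangle)/\sqrt2$: on input $b_0$ the first box measures its qubit in the $Z$ basis if $b_0=0$ and in the $X$ basis if $b_0=1$; on input $b_1$ the second box measures in the eigenbasis of $(Z+X)/\sqrt2$ if $b_1=0$ and of $(X-Z)/\sqrt2$ if $b_1=1$; measurement outcome $+1$ is output as bit $0$ and $-1$ as bit $1$. For every input pair, the mod-2 sum of the two outputs equals $b_0\wedge b_1$ with probability $\cos^2(\pi/8)$. Different copies of the CHSH box are independent. *)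

From Stdlib Require Import Reals.
From mathcomp Require Import all_boot all_order all_algebra.
From mathcomp Require Import Rstruct.

Set Implicit Arguments.
Unset Strict Implicit.
Unset Printing Implicit Defensive.
Local Open Scope R_scope.

(* The observable cos(t) Z + sin(t) X on one qubit (real amplitudes)    *)
(* has eigenvector (cos(t/2), sin(t/2)) for outcome +1 (bit 0) and      *)
(* (-sin(t/2), cos(t/2)) for outcome -1 (bit 1).                        *)
(*   Z : t = 0,  X : t = PI/2,  (Z+X)/sqrt2 : t = PI/4,                  *)
(*   (X-Z)/sqrt2 : t = 3PI/4.                                           *)

Definition eigvec (t : R) (x : bool) (i : bool) : R :=
  if x then (if i then cos (t / 2) else - sin (t / 2))
  else (if i then sin (t / 2) else cos (t / 2)).

(* Measurement angle of the first box on input b0 (Z if 0, X if 1). *)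
Definition angleA (b0 : bool) : R := if b0 then PI / 2 else 0.
(* Measurement angle of the second box on input b1
   ((Z+X)/sqrt2 if 0, (X-Z)/sqrt2 if 1). *)
Definition angleB (b1 : bool) : R := if b1 then 3 * PI / 4 else PI / 4.

Definition bell (i j : bool) : R := if i == j then / sqrt 2 else 0.

(* Born rule: probability that the first box outputs x and the second box
   outputs y, on inputs b0 and b1 (all amplitudes are real). *)
Definition chsh_prob (b0 b1 x y : bool) : R :=
  let amp := (\sum_(i : bool) \sum_(j : bool)
                eigvec (angleA b0) x i * eigvec (angleB b1) y j * bell i j)%R
  in (amp * amp)%R.

(* A one-bit box is named by (i, s) : 'I_m * bool, the copy i and the   *)
(* side s (false = first box, true = second box).                       *)

Definition box (m : nat) := ('I_m * bool)%type.

Record affine (n m : nat) := Affine {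
  aff_const : bool;
  aff_in    : {ffun 'I_n -> bool};
  aff_box   : {ffun box m -> bool} }.

Definition aff_eval n m (A : affine n m) (b : 'I_n -> bool) (o : box m -> bool)
  : bool :=
  xorb (aff_const A)
   (xorb (\big[xorb/false]_(j < n) (aff_in A j && b j))
         (\big[xorb/false]_(k : box m) (aff_box A k && o k))).

(* A procedure: the boxes are queried in the order given by the injective
   ranking [order]; the input of each box is a mod-2 affine function of the
   input bits and of the outputs of the boxes queried before it (adaptivity);
   the final output is a mod-2 affine function of the input bits and all
   box outputs. *)
Record l2proc (n m : nat) := L2Proc {
  order : box m -> nat;
  order_inj : injective order;
  box_input : box m -> affine n m;
  box_input_causal :
    forall k k' : box m, aff_box (box_input k) k' -> (order k' < order k)%N;
  final_output : affine n m }.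

Definition record_prob n m (P : l2proc n m) (b : 'I_n -> bool)
  (o : {ffun box m -> bool}) : R :=
  (\prod_(i < m)
     chsh_prob (aff_eval (box_input P (i, false)) b o)
               (aff_eval (box_input P (i, true)) b o)
               (o (i, false)) (o (i, true)))%R.

Definition output_prob n m (P : l2proc n m) (b : 'I_n -> bool) (c : bool) : R :=
  (\sum_(o : {ffun box m -> bool})
     if aff_eval (final_output P) b o == c then record_prob P b o else 0)%R.

(* A CHSH box is a noisy nonlinear gate for the mod-2 control: fed with the
   inputs a = 1 + v1 + v2 and b = v3 (+ v1), the parity v1 + x + y of its
   outputs equals the multiplexer "if v3 then v2 else v1" (resp. the majority
   of v1, v2, v3) with probability 1 - sin^2(pi/8), independently of how the
   bits v_i were produced by disjoint groups of boxes.  A Boolean function is a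
   tree of multiplexers on its input bits.  Each noisy multiplexer raises the
   error bound 0.4 to at most 0.43, and a few rounds of noisy majority votes over
   three independent copies, with error map p |-> s + (1 - 2s)(3p^2 - 2p^3) for
   s = sin^2(pi/8), bring it back below 0.4. *)

From HB Require Import structures.
From Pilot Require Import Defs.
From Stdlib Require Import Bool Reals Lra Psatz.
From mathcomp Require Import all_boot all_order all_algebra.
From mathcomp Require Import Rstruct.

Set Implicit Arguments.
Unset Strict Implicit.
Unset Printing Implicit Defensive.

Import GRing.Theory Num.Theory.

Lemma xorbA : associative xorb. Proof. by do 3!case. Qed.
Lemma xorbACA : interchange xorb xorb. Proof. by do 4!case. Qed.

HB.instance Definition _ :=
  Monoid.isComLaw.Build bool false xorb xorbA xorb_comm xorb_false_l.

Section AffineFunctions.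
Variables n m : nat.

Definition aff_cst (c : bool) : affine n m := Affine c [ffun=> false] [ffun=> false].

Definition aff_var (i : 'I_n) : affine n m :=
  Affine false [ffun j => j == i] [ffun=> false].

Definition aff_add (A B : affine n m) : affine n m :=
  Affine (xorb (aff_const A) (aff_const B))
         [ffun j => xorb (aff_in A j) (aff_in B j)]
         [ffun k => xorb (aff_box A k) (aff_box B k)].

Lemma aff_eval_cst c b (o : box m -> bool) : aff_eval (aff_cst c) b o = c.
Proof.
by rewrite /aff_eval !big1 ?xorb_false_r // => k _; rewrite ffunE.
Qed.

Lemma aff_eval_var i b (o : box m -> bool) : aff_eval (aff_var i) b o = b i.
Proof.
rewrite /aff_eval [X in xorb _ (xorb _ X)]big1 => [|k _]; last by rewrite ffunE.
rewrite (bigD1 i) //= ffunE eqxx big1 ?xorb_false_r // => j /negbTE ji.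
by rewrite ffunE ji.
Qed.

Lemma aff_eval_add A B b (o : box m -> bool) :
  aff_eval (aff_add A B) b o = xorb (aff_eval A b o) (aff_eval B b o).
Proof.
have andb_xorl x y z : xorb x y && z = xorb (x && z) (y && z) by case: x; case: y; case: z.
rewrite /aff_eval /=.
under eq_bigr do rewrite ffunE andb_xorl.
under [X in xorb _ (xorb _ X)]eq_bigr do rewrite ffunE andb_xorl.
rewrite !big_split /=.
by rewrite [X in xorb _ X]xorbACA xorbACA.
Qed.

End AffineFunctions.

Section BoxSplit.
Variables m1 m2 : nat.

Definition split_box (k : box (m1 + m2)) : box m1 + box m2 :=
  match split k.1 with inl i => inl (i, k.2) | inr i => inr (i, k.2) end.

Definition unsplit_box (k : box m1 + box m2) : box (m1 + m2) :=
  match k with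
  | inl (i, s) => (lshift m2 i, s)
  | inr (i, s) => (rshift m1 i, s)
  end.

Lemma split_boxK : cancel split_box unsplit_box.
Proof.
by case=> i s; rewrite /split_box; case: splitP => j /= ij; congr pair; apply: val_inj.
Qed.

Lemma unsplit_boxK : cancel unsplit_box split_box.
Proof. by case=> -[i s]; rewrite /split_box /= ?(unsplitK (inl i)) ?(unsplitK (inr i)). Qed.

Lemma split_box_lshift i s : split_box (lshift m2 i, s) = inl (i, s).
Proof. exact: (unsplit_boxK (inl (i, s))). Qed.

Lemma split_box_rshift i s : split_box (rshift m1 i, s) = inr (i, s).
Proof. exact: (unsplit_boxK (inr (i, s))). Qed.

Lemma big_split_box R (idx : R) (op : Monoid.com_law idx) (F : box (m1 + m2) -> R) :
  \big[op/idx]_k F k =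
  op (\big[op/idx]_(k : box m1) F (unsplit_box (inl k)))
     (\big[op/idx]_(k : box m2) F (unsplit_box (inr k))).
Proof.
rewrite (reindex unsplit_box) ?big_sumType //.
by exists split_box => k _; [exact: unsplit_boxK | exact: split_boxK].
Qed.

Definition rec_l (o : {ffun box (m1 + m2) -> bool}) : {ffun box m1 -> bool} :=
  [ffun k => o (unsplit_box (inl k))].

Definition rec_r (o : {ffun box (m1 + m2) -> bool}) : {ffun box m2 -> bool} :=
  [ffun k => o (unsplit_box (inr k))].

Definition rec_glue (o1 : {ffun box m1 -> bool}) (o2 : {ffun box m2 -> bool}) :
  {ffun box (m1 + m2) -> bool} :=
  [ffun k => match split_box k with inl k1 => o1 k1 | inr k2 => o2 k2 end].

Lemma rec_l_glue o1 o2 : rec_l (rec_glue o1 o2) = o1.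
Proof. by apply/ffunP => k; rewrite !ffunE unsplit_boxK. Qed.

Lemma rec_r_glue o1 o2 : rec_r (rec_glue o1 o2) = o2.
Proof. by apply/ffunP => k; rewrite !ffunE unsplit_boxK. Qed.

Lemma rec_glueK o : rec_glue (rec_l o) (rec_r o) = o.
Proof.
apply/ffunP => k; rewrite !ffunE -{2}[k]split_boxK.
by case: (split_box k) => k'; rewrite ffunE.
Qed.

Lemma sum_rec_glue (F : {ffun box (m1 + m2) -> bool} -> R) :
  (\sum_o F o = \sum_o1 \sum_o2 F (rec_glue o1 o2))%R.
Proof.
rewrite pair_bigA (reindex (fun p => rec_glue p.1 p.2)) //=.
exists (fun o => (rec_l o, rec_r o)) => [[o1 o2] _ | o _] /=.
  by rewrite rec_l_glue rec_r_glue.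
exact: rec_glueK.
Qed.

Variable n : nat.

Definition aff_liftl (A : affine n m1) : affine n (m1 + m2) :=
  Affine (aff_const A) (aff_in A)
    [ffun k => if split_box k is inl k1 then aff_box A k1 else false].

Definition aff_liftr (A : affine n m2) : affine n (m1 + m2) :=
  Affine (aff_const A) (aff_in A)
    [ffun k => if split_box k is inr k2 then aff_box A k2 else false].

Lemma aff_eval_liftl A b (o : {ffun box (m1 + m2) -> bool}) :
  aff_eval (aff_liftl A) b o = aff_eval A b (rec_l o).
Proof.
rewrite /aff_eval big_split_box.
rewrite [X in xorb _ (xorb _ (xorb _ X))]big1 => [|k _]; last by rewrite ffunE unsplit_boxK.
rewrite xorb_false_r; congr (xorb _ (xorb _ _)).
by apply: eq_bigr => k _; rewrite !ffunE unsplit_boxK.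
Qed.

Lemma aff_eval_liftr A b (o : {ffun box (m1 + m2) -> bool}) :
  aff_eval (aff_liftr A) b o = aff_eval A b (rec_r o).
Proof.
rewrite /aff_eval big_split_box.
rewrite [X in xorb _ (xorb _ (xorb X _))]big1 => [|k _]; last by rewrite ffunE unsplit_boxK.
congr (xorb _ (xorb _ _)).
by apply: eq_bigr => k _; rewrite !ffunE unsplit_boxK.
Qed.

End BoxSplit.

Lemma sum_record_output n m (P : l2proc n m) b (G : bool -> R) :
  (\sum_o record_prob P b o * G (aff_eval (final_output P) b o) =
   \sum_v output_prob P b v * G v)%R.
Proof.
rewrite big_bool /output_prob !mulr_suml -big_split; apply: eq_bigr => o _ /=.
by case: (aff_eval _ _ _); rewrite /= mul0r ?addr0 ?add0r.
Qed.

Section Parallel.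
Variables (n m1 m2 : nat) (P : l2proc n m1) (Q : l2proc n m2).

Definition par_order (k : box (m1 + m2)) : nat :=
  match split_box k with
  | inl k1 => (Defs.order P k1).*2
  | inr k2 => (Defs.order Q k2).*2.+1
  end.

Lemma par_order_inj : injective par_order.
Proof.
move=> k k'; rewrite /par_order => E; apply: (can_inj (@split_boxK m1 m2)).
move: E; case: (split_box k) => k1; case: (split_box k') => k2 E.
- by rewrite (order_inj (double_inj E)).
- by have := congr1 odd E; rewrite /= !odd_double.
- by have := congr1 odd E; rewrite /= !odd_double.
- by rewrite (order_inj (double_inj (succn_inj E))).
Qed.

Definition par_input (k : box (m1 + m2)) : affine n (m1 + m2) :=
  match split_box k with
  | inl k1 => aff_liftl m2 (box_input P k1)
  | inr k2 => aff_liftr m1 (box_input Q k2)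
  end.

Lemma par_input_causal k k' : aff_box (par_input k) k' -> par_order k' < par_order k.
Proof.
rewrite /par_input /par_order; case: (split_box k) => k1; rewrite ffunE;
  case: (split_box k') => k2 // /box_input_causal; by rewrite ?ltnS ltn_double.
Qed.

Definition par : l2proc n (m1 + m2) :=
  L2Proc par_order_inj par_input_causal (aff_liftl m2 (final_output P)).

Lemma record_prob_par b o :
  record_prob par b o = (record_prob P b (rec_l o) * record_prob Q b (rec_r o))%R.
Proof.
rewrite /record_prob big_split_ord; congr (_ * _)%R; apply: eq_bigr => i _.
  by rewrite /= /par_input !split_box_lshift !aff_eval_liftl !ffunE.
by rewrite /= /par_input !split_box_rshift !aff_eval_liftr !ffunE.
Qed.

Lemma sum_record_par b (F : {ffun box m1 -> bool} -> {ffun box m2 -> bool} -> R) :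
  (\sum_o record_prob par b o * F (rec_l o) (rec_r o) =
   \sum_o1 record_prob P b o1 * \sum_o2 record_prob Q b o2 * F o1 o2)%R.
Proof.
rewrite sum_rec_glue; apply: eq_bigr => o1 _; rewrite mulr_sumr.
apply: eq_bigr => o2 _.
by rewrite record_prob_par rec_l_glue rec_r_glue mulrA.
Qed.

End Parallel.

Section CHSHStatistics.
Local Open Scope R_scope.

(* [chsh_err = sin (PI / 8) ^ 2 = 1 - cos (PI / 8) ^ 2]. *)
Definition chsh_err : R := (1 - / sqrt 2) / 2.

Definition bsc_prob (u c : bool) : R := if c == u then 1 - chsh_err else chsh_err.

Lemma bsc_probXl f u c : bsc_prob (xorb f u) c = bsc_prob u (xorb f c).
Proof. by rewrite /bsc_prob; case: f; case: u; case: c. Qed.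

Lemma chsh_prob_xor b0 b1 d :
  (\sum_x \sum_y (if xorb x y == d then chsh_prob b0 b1 x y else 0))%R =
  (1 + (if d then -1 else 1) * cos (angleA b0 - angleB b1)) / 2.
Proof.
rewrite /chsh_prob; move: (angleA b0) (angleB b1) => a a'.
have half_sq : / sqrt 2 * / sqrt 2 = / 2 by rewrite -Rinv_mult sqrt_sqrt //; lra.
have -> : a - a' = 2 * (a / 2 - a' / 2) by field.
rewrite !big_bool /eigvec /bell /= -!RplusE -!RmultE -!R0E.
case: d => /=; [rewrite cos_2a_sin sin_minus | rewrite cos_2a_cos cos_minus];
  move: half_sq (cos (a / 2)) (sin (a / 2)) (cos (a' / 2)) (sin (a' / 2));
  move: (/ sqrt 2) => u half_sq c s c' s'.
- transitivity (2 * (u * u) * ((s * c' - c * s') * (s * c' - c * s'))); first ring.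
  by rewrite half_sq; field.
- transitivity (2 * (u * u) * ((c * c' + s * s') * (c * c' + s * s'))); first ring.
  by rewrite half_sq; field.
Qed.

Lemma cos_angle_diff b0 b1 :
  cos (angleA b0 - angleB b1) = if ~~ b0 && b1 then - / sqrt 2 else / sqrt 2.
Proof.
have cos_PI4' : cos (PI / 4) = / sqrt 2 by rewrite cos_PI4; field; apply: sqrt2_neq_0.
case: b0; case: b1; rewrite /angleA /angleB /= -?cos_PI4'.
- have -> : PI / 2 - 3 * PI / 4 = - (PI / 4) by field.
  by rewrite cos_neg.
- by have -> : PI / 2 - PI / 4 = PI / 4 by field.
- have -> : 0 - 3 * PI / 4 = - (- (PI / 4) + PI) by field.
  by rewrite cos_neg neg_cos cos_neg.
- have -> : 0 - PI / 4 = - (PI / 4) by field.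
  by rewrite cos_neg.
Qed.

(* With the eigenbases fixed in [Defs] the likely parity of the outputs is
   [~~ b0 && b1] (not [b0 && b1]); any AND-like relation serves equally well. *)
Lemma chsh_prob_xor_bsc b0 b1 d :
  (\sum_x \sum_y (if xorb x y == d then chsh_prob b0 b1 x y else 0))%R =
  bsc_prob (~~ b0 && b1) d.
Proof.
rewrite chsh_prob_xor cos_angle_diff /bsc_prob /chsh_err.
by case: (~~ b0 && b1); case: d => /=; lra.
Qed.

Lemma chsh_err_le : chsh_err <= 0.14645.
Proof.
have sqrt2_sq := sqrt_sqrt 2 ltac:(lra).
have sqrt2_ge0 := sqrt_pos 2.
have sqrt2_inv : / sqrt 2 * sqrt 2 = 1 by field; nra.
rewrite /chsh_err; nra.
Qed.

End CHSHStatistics.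

Section AppendBox.
Variables (n m : nat) (J : l2proc n m) (A B F : affine n m).

Definition app_order (k : box (m + 1)) : nat :=
  match split_box k with
  | inl k1 => Defs.order J k1
  | inr k2 => (\max_(k1 : box m) Defs.order J k1).+1 + k2.2
  end.

Lemma app_order_inj : injective app_order.
Proof.
have order_small k1 s : Defs.order J k1 < (\max_(k : box m) Defs.order J k).+1 + s.
  by rewrite ltnS (leq_trans (leq_bigmax k1)) ?leq_addr.
move=> k k'; rewrite /app_order => E; apply: (can_inj (@split_boxK m 1)).
move: E; case: (split_box k) => k1; case: (split_box k') => k2 E.
- by rewrite (order_inj E).
- by have := order_small k1 k2.2; rewrite E ltnn.
- by have := order_small k2 k1.2; rewrite -E ltnn.
- move: k1 k2 E => [i s] [i' s'] /= /addnI.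
  by rewrite (ord1 i) (ord1 i'); case: s; case: s'.
Qed.

Definition app_input (k : box (m + 1)) : affine n (m + 1) :=
  match split_box k with
  | inl k1 => aff_liftl 1 (box_input J k1)
  | inr k2 => aff_liftl 1 (if k2.2 then B else A)
  end.

Lemma app_input_causal k k' : aff_box (app_input k) k' -> app_order k' < app_order k.
Proof.
rewrite /app_input /app_order; case: (split_box k) => k1; rewrite ffunE;
  case: (split_box k') => k2 //.
- exact: box_input_causal.
- by move=> _; rewrite ltnS (leq_trans (leq_bigmax k2)) ?leq_addr.
Qed.

Definition aff_parity : affine n 1 := Affine false [ffun=> false] [ffun=> true].

Lemma aff_eval_parity b (o : box 1 -> bool) :
  aff_eval aff_parity b o = xorb (o (ord0, false)) (o (ord0, true)).
Proof.
rewrite /aff_eval [X in xorb _ (xorb X _)]big1 => [|j _]; last by rewrite ffunE.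
rewrite (eq_bigr (fun k => o (k.1, k.2))) => [|[i s] _]; last by rewrite ffunE.
by rewrite -(pair_bigA _ (fun i s => o (i, s))) big_ord1 big_bool /= xorb_comm.
Qed.

Definition app : l2proc n (m + 1) :=
  L2Proc app_order_inj app_input_causal
    (aff_add (aff_liftl 1 F) (aff_liftr m aff_parity)).

Lemma record_prob_app b o :
  record_prob app b o =
  (record_prob J b (rec_l o) *
   chsh_prob (aff_eval A b (rec_l o)) (aff_eval B b (rec_l o))
             (rec_r o (ord0, false)) (rec_r o (ord0, true)))%R.
Proof.
rewrite /record_prob big_split_ord big_ord1; congr (_ * _)%R.
  apply: eq_bigr => i _.
  by rewrite /= /app_input !split_box_lshift !aff_eval_liftl !ffunE.
by rewrite /= /app_input !split_box_rshift !aff_eval_liftl !ffunE.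
Qed.

Lemma sum_rec_box1 (G : bool -> bool -> R) :
  (\sum_(o : {ffun box 1 -> bool}) G (o (ord0, false)) (o (ord0, true)) =
   \sum_x \sum_y G x y)%R.
Proof.
rewrite pair_bigA /=.
rewrite (reindex (fun p : bool * bool => [ffun k : box 1 => if k.2 then p.2 else p.1])).
  by apply: eq_bigr => -[x y] _; rewrite !ffunE.
exists (fun o : {ffun box 1 -> bool} => (o (ord0, false), o (ord0, true))).
  by move=> [x y] _; rewrite !ffunE.
by move=> o _; apply/ffunP => -[i s]; rewrite ffunE (ord1 i); case: s.
Qed.

Lemma output_prob_app b c :
  output_prob app b c =
  (\sum_o record_prob J b o *
     bsc_prob (xorb (aff_eval F b o) (~~ aff_eval A b o && aff_eval B b o)) c)%R.
Proof.
rewrite /output_prob sum_rec_glue; apply: eq_bigr => o1 _.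
under eq_bigr do rewrite /= aff_eval_add aff_eval_liftl aff_eval_liftr aff_eval_parity
  record_prob_app rec_l_glue rec_r_glue.
rewrite (sum_rec_box1 (fun x y => if xorb (aff_eval F b o1) (xorb x y) == c
  then record_prob J b o1 * chsh_prob (aff_eval A b o1) (aff_eval B b o1) x y else 0)%R).
rewrite bsc_probXl -chsh_prob_xor_bsc mulr_sumr; apply: eq_bigr => x _.
rewrite mulr_sumr; apply: eq_bigr => y _.
by case: (aff_eval F b o1); case: x; case: y; case: c; rewrite /= ?mulr0.
Qed.

End AppendBox.

(* [node_gate true] is the majority of [v1 v2 v3];
   [node_gate false] is the multiplexer [if v3 then v2 else v1]. *)
Definition node_gate (maj v1 v2 v3 : bool) : bool :=
  xorb v1 (xorb v1 v2 && xorb (maj && v1) v3).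

Section Node.
Variables (n m1 m2 m3 : nat) (P1 : l2proc n m1) (P2 : l2proc n m2) (P3 : l2proc n m3).
Variable maj : bool.

Let Y1 : affine n (m1 + m2 + m3) := aff_liftl m3 (aff_liftl m2 (final_output P1)).
Let Y2 : affine n (m1 + m2 + m3) := aff_liftl m3 (aff_liftr m1 (final_output P2)).
Let Y3 : affine n (m1 + m2 + m3) := aff_liftr (m1 + m2) (final_output P3).

Definition node : l2proc n (m1 + m2 + m3 + 1) :=
  app (par (par P1 P2) P3) (aff_add (aff_cst _ _ true) (aff_add Y1 Y2))
      (if maj then aff_add Y1 Y3 else Y3) Y1.

Lemma output_prob_node b c :
  output_prob node b c =
  (\sum_v1 output_prob P1 b v1 * \sum_v2 output_prob P2 b v2 *
     \sum_v3 output_prob P3 b v3 * bsc_prob (node_gate maj v1 v2 v3) c)%R.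
Proof.
pose out1 := aff_eval (final_output P1) b.
pose out2 := aff_eval (final_output P2) b.
pose out3 := aff_eval (final_output P3) b.
pose G v1 v2 v3 := bsc_prob (node_gate maj v1 v2 v3) c.
rewrite output_prob_app.
transitivity (\sum_o record_prob (par (par P1 P2) P3) b o *
  G (out1 (rec_l (rec_l o))) (out2 (rec_r (rec_l o))) (out3 (rec_r o)))%R.
  apply: eq_bigr => o _; congr (_ * bsc_prob _ _)%R.
  rewrite /node_gate !aff_eval_add aff_eval_cst /Y1 /Y2 /Y3.
  by case: maj; rewrite ?aff_eval_add !aff_eval_liftl ?aff_eval_liftr ?aff_eval_liftl
    xorb_true_l negbK.
rewrite (sum_record_par _ _ b
  (fun o12 o3 => G (out1 (rec_l o12)) (out2 (rec_r o12)) (out3 o3))).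
under eq_bigr do rewrite (sum_record_output P3 b (G _ _)).
rewrite (sum_record_par _ _ b
  (fun o1 o2 => \sum_v3 output_prob P3 b v3 * G (out1 o1) (out2 o2) v3)%R).
under eq_bigr do rewrite (sum_record_output P2 b
  (fun v2 => \sum_v3 output_prob P3 b v3 * G _ v2 v3)%R).
exact: (sum_record_output P1 b
  (fun v1 => \sum_v2 output_prob P2 b v2 * \sum_v3 output_prob P3 b v3 * G v1 v2 v3)%R).
Qed.

End Node.

Local Open Scope R_scope.

Section Leaf.
Variables (n : nat) (A : affine n 0).

Lemma leaf_order_inj : injective (fun _ : box 0 => 0%N).
Proof. by case=> -[]. Qed.

Lemma leaf_input_causal (k k' : box 0) : aff_box A k' -> (0 < 0)%N.
Proof. by case: k' => -[]. Qed.

Definition leaf : l2proc n 0 := L2Proc leaf_order_inj leaf_input_causal A.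

Lemma output_prob_leaf b c :
  output_prob leaf b c = if aff_eval A b [ffun=> false] == c then 1 else 0.
Proof.
rewrite /output_prob (big_pred1 [ffun=> false]) => [|o]; last first.
  by apply/esym/eqP/ffunP => -[[]].
by rewrite /record_prob big_ord0.
Qed.

End Leaf.

Lemma output_prob_ge0 n m (P : l2proc n m) b c : 0 <= output_prob P b c.
Proof.
apply/RleP/sumr_ge0 => o _; case: eqP => // _.
by apply: prodr_ge0 => i _; exact: sqr_ge0.
Qed.

Definition computes n (g : {ffun 'I_n -> bool} -> bool) (p : R) : Prop :=
  exists m (P : l2proc n m), forall b : {ffun 'I_n -> bool},
    output_prob P b (g b) + output_prob P b (~~ g b) = 1 /\
    output_prob P b (~~ g b) <= p.

Lemma computes_weaken n (g : {ffun 'I_n -> bool} -> bool) p p' :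
  p <= p' -> computes g p -> computes g p'.
Proof.
move=> pp' [m [P HP]]; exists m, P => b.
by have [sum err] := HP b; split; last lra.
Qed.

Lemma computes_ext n (g g' : {ffun 'I_n -> bool} -> bool) p :
  g =1 g' -> computes g p -> computes g' p.
Proof. by move=> gg' [m [P HP]]; exists m, P => b; rewrite -gg'. Qed.

Lemma computes_leaf n (g : {ffun 'I_n -> bool} -> bool) (A : affine n 0) :
  (forall b : {ffun 'I_n -> bool}, aff_eval A b [ffun=> false] = g b) -> computes g 0.
Proof.
move=> Ag; exists 0%N, (leaf A) => b; rewrite !output_prob_leaf Ag.
by case: (g b) => /=; lra.
Qed.

Lemma output_prob_by_err n m (P : l2proc n m) b u e :
  output_prob P b u + output_prob P b (~~ u) = 1 -> output_prob P b (~~ u) = e ->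
  forall v, output_prob P b v = if v == u then 1 - e else e.
Proof.
move=> sum err v; have [-> | vu] := eqVneq v u; first lra.
by have -> : v = ~~ u by move: vu; case: (u); case: v.
Qed.

Definition maj_err (p : R) : R := 3 * p * p - 2 * p * p * p.

Definition channel_err (q : R) : R := chsh_err + (1 - 2 * chsh_err) * q.

Lemma maj_err_le e p : 0 <= e <= p -> p <= 1 / 2 -> maj_err e <= maj_err p.
Proof.
move=> [e0 ep] p_half; rewrite /maj_err.
have : 0 <= (p - e) * (3 * (p + e) - 2 * (p * p + p * e + e * e)) by apply: Rmult_le_pos; nra.
nra.
Qed.

Lemma channel_err_le q q' : q <= q' -> channel_err q <= channel_err q'.
Proof. by move=> qq'; have := chsh_err_le; rewrite /channel_err; nra. Qed.

Lemma computes_maj n (g : {ffun 'I_n -> bool} -> bool) p :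
  0 <= p <= 1 / 2 -> computes g p -> computes g (channel_err (maj_err p)).
Proof.
move=> [p0 p_half] [m [P HP]]; exists _, (node P P P true) => b.
have [sum err] := HP b.
have e0 := output_prob_ge0 P b (~~ g b).
move: (output_prob_by_err sum erefl) e0 err.
move: (output_prob P b (~~ g b)) => e distr e0 err.
have mono : channel_err (maj_err e) <= channel_err (maj_err p).
  by apply/channel_err_le/maj_err_le.
rewrite !output_prob_node !big_bool !distr /bsc_prob.
by case: (g b) => /=; rewrite -!RplusE -!RmultE; (split;
  [ring | apply: Rle_trans mono; apply: Req_le; rewrite /channel_err /maj_err; ring]).
Qed.

Lemma computes_mux n (s g0 g1 : {ffun 'I_n -> bool} -> bool) p :
  computes s 0 -> computes g0 p -> computes g1 p ->
  computes (fun b => if s b then g1 b else g0 b) (channel_err p).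
Proof.
move=> [ms [Ps Hs]] [m0 [P0 H0]] [m1 [P1 H1]]; exists _, (node P0 P1 Ps false) => b.
have [sum_s err_s] := Hs b; have [sum0 err0] := H0 b; have [sum1 err1] := H1 b.
have exact_s : output_prob Ps b (~~ s b) = 0.
  by have := output_prob_ge0 Ps b (~~ s b); lra.
move: (output_prob_by_err sum0 erefl) (output_prob_by_err sum1 erefl) err0 err1.
move: (output_prob P0 b (~~ g0 b)) (output_prob P1 b (~~ g1 b)).
move=> e0 e1 distr0 distr1 err0 err1.
have mono : channel_err (if s b then e1 else e0) <= channel_err p.
  by apply: channel_err_le; case: (s b).
rewrite !output_prob_node !big_bool !(output_prob_by_err sum_s exact_s) !distr0 !distr1.
rewrite /bsc_prob.
by move: mono; case: (s b); case: (g0 b); case: (g1 b) => /= mono;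
  rewrite -!RplusE -!RmultE; (split;
  [ring | apply: Rle_trans mono; apply: Req_le; rewrite /channel_err; ring]).
Qed.

Lemma computes_const n (c : bool) : computes (fun _ : {ffun 'I_n -> bool} => c) 0.
Proof. by apply: (computes_leaf (A := aff_cst n 0 c)) => b; rewrite aff_eval_cst. Qed.

Lemma computes_var n (i : 'I_n) : computes (fun b : {ffun 'I_n -> bool} => b i) 0.
Proof. by apply: (computes_leaf (A := aff_var 0 i)) => b; rewrite aff_eval_var. Qed.

Lemma computes_maj_step n (g : {ffun 'I_n -> bool} -> bool) r r' :
  0 <= r <= 1 / 2 -> 0.14645 + 0.7071 * maj_err r <= r' ->
  computes g r -> computes g r'.
Proof.
move=> r_bds step /(computes_maj r_bds); apply: computes_weaken.
have maj0 : 0 <= maj_err r by rewrite /maj_err; nra.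
have maj_half : maj_err r <= 1 / 2.
  have := @maj_err_le r (1 / 2) ltac:(lra) ltac:(lra).
  by rewrite [maj_err (1 / 2)]/maj_err; lra.
by have := chsh_err_le; rewrite /channel_err; nra.
Qed.

(* The thresholds are upper roundings of the iterates of [channel_err \o maj_err]
   from [channel_err 0.4 <= 0.42929]; [0.7071 = 1 - 2 * 0.14645]. *)
Lemma computes_amplify n (g : {ffun 'I_n -> bool} -> bool) :
  computes g 0.42929 -> computes g 0.4.
Proof.
move=> g_ok.
apply: (computes_maj_step (r := 0.40453)); [lra | rewrite /maj_err; lra |].
apply: (computes_maj_step (r := 0.40898)); [lra | rewrite /maj_err; lra |].
apply: (computes_maj_step (r := 0.41331)); [lra | rewrite /maj_err; lra |].
apply: (computes_maj_step (r := 0.41751)); [lra | rewrite /maj_err; lra |].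
apply: (computes_maj_step (r := 0.42158)); [lra | rewrite /maj_err; lra |].
apply: (computes_maj_step (r := 0.42551)); [lra | rewrite /maj_err; lra |].
by apply: (computes_maj_step (r := 0.42929)) g_ok; [lra | rewrite /maj_err; lra].
Qed.

Lemma computes_mux_bit n (i : 'I_n) (g0 g1 : {ffun 'I_n -> bool} -> bool) :
  computes g0 0.4 -> computes g1 0.4 ->
  computes (fun b => if b i then g1 b else g0 b) 0.4.
Proof.
move=> g0_ok g1_ok; apply: computes_amplify.
apply: computes_weaken (computes_mux (computes_var i) g0_ok g1_ok).
by have := chsh_err_le; rewrite /channel_err; lra.
Qed.

Definition depends_below n k (g : {ffun 'I_n -> bool} -> bool) : Prop :=
  forall b b' : {ffun 'I_n -> bool},
    (forall i : 'I_n, (i < k)%N -> b i = b' i) -> g b = g b'.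

Definition set_bit n (b : {ffun 'I_n -> bool}) (i : 'I_n) (v : bool) :
  {ffun 'I_n -> bool} := [ffun j => if j == i then v else b j].

Lemma computes_depends_below n k (g : {ffun 'I_n -> bool} -> bool) :
  (k <= n)%N -> depends_below k g -> computes g 0.4.
Proof.
elim: k g => [|k IHk] g k_le g_dep.
  apply: computes_ext (fun b => g_dep [ffun=> false] b _) _ => //.
  by apply: computes_weaken (computes_const _ _); lra.
pose i := Ordinal k_le.
have gv_dep v : depends_below k (fun b => g (set_bit b i v)).
  move=> b b' bb'; apply: g_dep => j j_lt; rewrite !ffunE; case: eqP => // ji.
  apply: bb'; move: j_lt; rewrite ltnS leq_eqVlt => /predU1P [jk | //].
  by case: ji; apply: val_inj.
apply: computes_ext (computes_mux_bit i (IHk _ (ltnW k_le) (gv_dep false))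
                                        (IHk _ (ltnW k_le) (gv_dep true))) => b.
by case: ifP => bi; congr g; apply/ffunP => j; rewrite ffunE; case: eqP => // ->.
Qed.

Theorem mainTheorem1 :
  exists delta : R, (delta < 1 / 2)%R /\
    forall (n : nat), (1 <= n)%N ->
    forall f : {ffun 'I_n -> bool} -> bool,
    exists (m : nat) (P : l2proc n m),
      forall b : {ffun 'I_n -> bool},
        (1 - delta <= output_prob P b (f b))%R.
Proof.
exists 0.4; split; first by apply/RltP; change (0.4 < 1 * / 2); lra.
move=> n _ f.
have [m [P P_ok]] : computes f 0.4.
  apply: (computes_depends_below (leqnn n)) => b b' bb'.
  by congr f; apply/ffunP => i; exact: bb'.
exists m, P => b; have [sum err] := P_ok b.
by apply/RleP; change (1 - 0.4 <= output_prob P b (f b)); lra.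
Qed.
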